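(* Let $G=(V,E)$ be an $n$-node graph, let $e \ge 1$ be an integer, and let $\mathcal{C}$ be the output of $\mathbf{cluster}(G, e)$. Then there are at most $ne$ edges in $G$ with both endpoints unclustered in $\mathcal{C}$.
   Context: $G$ is an unweighted undirected graph. The procedure $\mathbf{cluster}(G,e)$ is: initialize $\mathcal{C} = \emptyset$ and unmark all nodes; while there is an unmarked node $u$ with at least $e-1$ unmarked neighbors, let $C$ be the set consisting of $u$ together with any $e-1$ of its unmarked neighbors, mark all nodes of $C$, and add $C$ to $\mathcal{C}$; finally return $\mathcal{C}$. Each $C \in \mathcal{C}$ is called a cluster; a node is clustered if it belongs to some cluster in $\mathcal{C}$ and unclustered otherwise. *)

From mathcomp Require Import all_boot.
Set Implicit Arguments. Unset Strict Implicit. Unset Printing Implicit Defensive.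

(* A graph on vertex type T is given by an adjacency relation adj : rel T;
   it is an (undirected, simple) graph when adj is symmetric and irreflexive. *)

Section Cluster.
Variables (T : finType) (adj : rel T) (e : nat).

Definition unmarked_nbrs (M : {set T}) (u : T) : {set T} :=
  [set v | adj u v & v \notin M].

Definition cluster_step (M : {set T}) (C : {set T}) : Prop :=
  exists u : T, exists S : {set T},
    [/\ u \notin M, S \subset unmarked_nbrs M u, #|S| = e.-1 & C = u |: S].

(* the while-loop guard is false: no unmarked node has >= e-1 unmarked nbrs *)
Definition cluster_stop (M : {set T}) : Prop :=
  forall u : T, u \notin M -> #|unmarked_nbrs M u| < e.-1.

(* cs (in order of creation) is a possible run of the loop starting with
   marked set M and ending when the guard fails. *)
Fixpoint cluster_run (M : {set T}) (cs : seq {set T}) : Prop :=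
  match cs with
  | [::] => cluster_stop M
  | C :: cs' => cluster_step M C /\ cluster_run (M :|: C) cs'
  end.

Definition is_cluster_output (cs : seq {set T}) : Prop := cluster_run set0 cs.

Definition clustered (cs : seq {set T}) (x : T) : bool :=
  has (fun C : {set T} => x \in C) cs.

Definition edges : {set {set T}} :=
  [set E : {set T} | [exists x, exists y, adj x y && (E == [set x; y])]].

Definition unclustered_edges (cs : seq {set T}) : {set {set T}} :=
  [set E in edges | [forall x in E, ~~ clustered cs x]].

End Cluster.

From mathcomp Require Import all_boot.

Set Implicit Arguments.
Unset Strict Implicit.
Unset Printing Implicit Defensive.

(* When the loop stops, every node still unmarked has fewer than [e - 1]
   unmarked neighbours.  An edge between two unclustered nodes joins two such
   nodes, so charging it to either endpoint bounds the number of these edges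
   by [n (e - 1) <= n e]. *)

Section UnclusteredEdges.
Variables (T : finType) (adj : rel T) (e : nat).

Lemma cluster_run_stop (M : {set T}) (cs : seq {set T}) :
  cluster_run adj e M cs ->
  exists2 M' : {set T}, cluster_stop adj e M' &
    forall x, (x \in M') = (x \in M) || clustered cs x.
Proof.
elim: cs M => [|C cs IH] M /=.
  by move=> stopM; exists M => // x; rewrite /clustered /= orbF.
case=> _ /IH [M' stopM' M'E]; exists M' => // x.
by rewrite M'E in_setU /clustered /= orbA.
Qed.

Lemma cluster_output_stop (cs : seq {set T}) :
  is_cluster_output adj e cs ->
  exists2 M : {set T}, cluster_stop adj e M & forall x, (x \in M) = clustered cs x.
Proof.
by case/cluster_run_stop=> M stopM ME; exists M => // x; rewrite ME in_set0.
Qed.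

Lemma card_edges_outside (M : {set T}) :
  #|[set E in edges adj | E \subset ~: M]|
    <= \sum_(u | u \notin M) #|unmarked_nbrs adj M u|.
Proof.
pose P := [pred p : T * T | (p.1 \notin M) && (p.2 \in unmarked_nbrs adj M p.1)].
have edges_sub : [set E in edges adj | E \subset ~: M]
    \subset (fun p : T * T => [set p.1; p.2]) @: P.
  apply/subsetP => E; rewrite !inE => /andP[/existsP[x /existsP[y]]].
  case/andP=> adj_xy /eqP -> /subsetP outM.
  have /[!inE] xM := outM x (set21 x y); have /[!inE] yM := outM y (set22 x y).
  by apply/imsetP; exists (x, y); rewrite // !inE /= xM adj_xy.
have cardP : #|P| = \sum_(u | u \notin M) #|unmarked_nbrs adj M u|.
  rewrite -sum1_card (eq_bigl (fun p : T * T => (p.1, p.2) \in P)); last by case.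
  rewrite -(pair_big_dep xpredT (fun u v => (u, v) \in P) (fun _ _ => 1)) /=.
  rewrite (bigID (fun u => u \in M)) /= big1 ?add0n => [|u uM].
    apply: eq_bigr => u uM; rewrite sum1_card.
    by apply: eq_card => v; rewrite unfold_in /= !inE uM.
  by rewrite big_pred0 // => v; rewrite !inE /= uM.
by rewrite -cardP (leq_trans (subset_leq_card edges_sub)) ?leq_imset_card.
Qed.

Lemma sum_unmarked_nbrs_stop (M : {set T}) :
  cluster_stop adj e M ->
  \sum_(u | u \notin M) #|unmarked_nbrs adj M u| <= #|T| * e.-1.
Proof.
move=> stopM; apply: (@leq_trans (\sum_(u | u \notin M) e.-1)).
  by apply: leq_sum => u /stopM /ltnW.
rewrite -sum_nat_const [X in _ <= X](bigID (fun u => u \notin M)) /=.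
exact: leq_addr.
Qed.

End UnclusteredEdges.

Theorem claim1 (T : finType) (adj : rel T) (e : nat) (cs : seq {set T}) :
  symmetric adj -> irreflexive adj -> 1 <= e ->
  is_cluster_output adj e cs ->
  #|unclustered_edges adj cs| <= #|T| * e.
Proof.
(* The bound holds for any relation [adj] and any [e]. *)
move=> _ _ _ /cluster_output_stop[M stopM ME].
have unclustered_outside :
    unclustered_edges adj cs \subset [set E in edges adj | E \subset ~: M].
  apply/subsetP => E; rewrite !inE => /andP[-> /forallP unclE].
  by apply/subsetP => x xE; rewrite inE ME; exact: (implyP (unclE x)).
apply: leq_trans (subset_leq_card unclustered_outside) _.
apply: leq_trans (card_edges_outside adj M) _.
apply: leq_trans (sum_unmarked_nbrs_stop stopM) _.
by rewrite leq_mul2l leq_pred orbT.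
Qed.
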